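(* Let $\Gamma$ be a group and $n \ge 0$ an integer. Then the quotient $P\mathcal{S}(\Gamma)/\overline{D^n}(P\mathcal{S}(\Gamma))$ is canonically isomorphic to $\Gamma/D^n(\Gamma)$.
   Context: For a group $\Gamma$, let $\mathcal{S}$ be the family of all normal subgroups $N$ of $\Gamma$ with $\Gamma/N$ soluble; it is directed (the intersection of two members contains a member). Let $\mathcal{C}\mathcal{S}(\Gamma)=\bigcap_{N\in\mathcal{S}}N$. The group $\Gamma/\mathcal{C}\mathcal{S}(\Gamma)$ carries the Hausdorff group topology for which the images of the members of $\mathcal{S}$ form a basis of neighbourhoods of the identity; its completion (with respect to the left uniformity) is the true prosoluble completion $P\mathcal{S}(\Gamma)$, a complete Hausdorff topological group, which can be identified with the inverse limit $\varprojlim_{N\in\mathcal{S}}\Gamma/N$. There is a canonical homomorphism $\Gamma\to P\mathcal{S}(\Gamma)$ with dense image. $D^n(\Gamma)$ denotes the $n$-th term of the derived series ($D^0(\Gamma)=\Gamma$, $D^{n+1}(\Gamma)=[D^n(\Gamma),D^n(\Gamma)]$). For a topological group $G$, the topological derived series is defined by $\overline{D^0}(G)=G$ and $\overline{D^{n+1}}(G)$ = the closure of the subgroup generated by the commutators $a^{-1}b^{-1}ab$ with $a,b\in\overline{D^n}(G)$. *)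

Record group := Group {
  car :> Type;
  gmul : car -> car -> car;
  ginv : car -> car;
  gone : car;
  gmulA : forall x y z, gmul x (gmul y z) = gmul (gmul x y) z;
  gmul1 : forall x, gmul gone x = x;
  gmulV : forall x, gmul (ginv x) x = gone }.

Section GroupDefs.
Variable G : group.
Notation gset := (car G -> Prop).

Definition subset (A B : gset) : Prop := forall x, A x -> B x.

Definition is_subgroup (H : gset) : Prop :=
  H (gone G) /\ (forall x y, H x -> H y -> H (gmul G x y)) /\
  (forall x, H x -> H (ginv G x)).

Definition is_normal (N : gset) : Prop :=
  is_subgroup N /\ forall g h, N h -> N (gmul G (ginv G g) (gmul G h g)).

Definition generated (A : gset) : gset :=
  fun x => forall H, is_subgroup H -> subset A H -> H x.

Definition comm (a b : car G) : car G :=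
  gmul G (gmul G (ginv G a) (ginv G b)) (gmul G a b).

Fixpoint derived (n : nat) : gset :=
  match n with
  | 0 => fun _ => True
  | S k => generated (fun x => exists a b, derived k a /\ derived k b /\ x = comm a b)
  end.

(* The family S: normal subgroups N with G/N soluble, i.e. D^k(G) <= N for some k. *)
Definition solQ (N : gset) : Prop :=
  is_normal N /\ exists k, subset (derived k) N.

Definition coset (g : car G) (N : gset) : gset := fun y => N (gmul G (ginv G g) y).

(* Elements of the inverse limit  lim_{N in S} G/N : compatible families of cosets,
   represented as functions N |-> coset of N (values off S are irrelevant). *)
Definition PSel := gset -> gset.

Definition is_PS (x : PSel) : Prop :=
  (forall N, solQ N -> exists g, x N = coset g N) /\
  (forall N M, solQ N -> solQ M -> subset N M -> subset (x N) (x M)).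

Definition PS_eq (x y : PSel) : Prop := forall N, solQ N -> x N = y N.

Definition PS_mul (x y : PSel) : PSel :=
  fun N z => exists a b, x N a /\ y N b /\ z = gmul G a b.
Definition PS_inv (x : PSel) : PSel :=
  fun N z => exists a, x N a /\ z = ginv G a.

Definition PS_iota (g : car G) : PSel := fun N => coset g N.

Definition PS_one : PSel := PS_iota (gone G).

(* subgroups of PS(G) (saturated for equality in the inverse limit) *)
Definition PS_subgroup (H : PSel -> Prop) : Prop :=
  (forall x, H x -> is_PS x) /\
  (forall x y, H x -> is_PS y -> PS_eq x y -> H y) /\
  H PS_one /\
  (forall x y, H x -> H y -> H (PS_mul x y)) /\
  (forall x, H x -> H (PS_inv x)).

Definition PS_generated (A : PSel -> Prop) : PSel -> Prop :=
  fun x => forall H, PS_subgroup H -> (forall a, A a -> H a) -> H x.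

Definition PS_comm (a b : PSel) : PSel :=
  PS_mul (PS_mul (PS_inv a) (PS_inv b)) (PS_mul a b).

(* Closure in the topology of PS(G): the basic neighbourhoods of x are
   x K_N = { y | y N = x N } for N in S (K_N = kernel of PS(G) -> G/N). *)
Definition PS_closure (A : PSel -> Prop) : PSel -> Prop :=
  fun x => is_PS x /\ forall N, solQ N -> exists a, A a /\ a N = x N.

Fixpoint PS_tderived (n : nat) : PSel -> Prop :=
  match n with
  | 0 => is_PS
  | S k => PS_closure (PS_generated
             (fun x => exists a b, PS_tderived k a /\ PS_tderived k b /\ x = PS_comm a b))
  end.

End GroupDefs.

From Stdlib Require Import FunctionalExtensionality PropExtensionality PeanoNat.

(* Let K_N be the kernel of the projection PS(G) -> G/N.  By induction on n, the
   closure of the n-th derived subgroup of PS(G) is exactly K_(D^n(G)).  K_N is a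
   subgroup depending only on N-components, hence closed, and commutators of
   elements of K_(D^k(G)) lie in K_(D^(k+1)(G)).  Conversely, on any given N an
   element of K_(D^(k+1)(G)) agrees with the image of some element of D^(k+1)(G)
   (read off its component at a D^m(G) inside both N and D^(k+1)(G)), and that
   image lies in the commutator subgroup of the image of D^k(G).  Since
   PS(G) -> G/D^n(G) is onto, its kernel K_(D^n(G)) gives the isomorphism. *)

Declare Scope group_scope.
Notation "x * y" := (gmul _ x y) : group_scope.
Notation "x ^-1" := (ginv _ x) (at level 3, left associativity, format "x ^-1") : group_scope.
Notation "1" := (gone _) : group_scope.
Local Open Scope group_scope.

Lemma pred_ext {T : Type} (A B : T -> Prop) : (forall y, A y <-> B y) -> A = B.
Proof.
  intro H; apply functional_extensionality; intro y.
  apply propositional_extensionality; auto.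
Qed.

Section GroupTheory.
Context {G : group}.
Implicit Types x y : G.

Lemma mulKg x y : x^-1 * (x * y) = y.
Proof. rewrite gmulA, gmulV, gmul1; reflexivity. Qed.

Lemma mulgV x : x * x^-1 = 1.
Proof.
  assert (idempotent_one : forall e : G, e * e = e -> e = 1).
  { intros e He. rewrite <- (gmulV G e). rewrite <- He at 3. rewrite mulKg. reflexivity. }
  apply idempotent_one. rewrite <- gmulA, mulKg. reflexivity.
Qed.

Lemma mulg1 x : x * 1 = x.
Proof. rewrite <- (gmulV G x), gmulA, mulgV, gmul1; reflexivity. Qed.

Lemma mulVKg x y : x * (x^-1 * y) = y.
Proof. rewrite gmulA, mulgV, gmul1; reflexivity. Qed.

Lemma invg_unique x y : x * y = 1 -> x^-1 = y.
Proof. intro H. rewrite <- (mulg1 x^-1), <- H, mulKg. reflexivity. Qed.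

Lemma invgK x : x^-1^-1 = x.
Proof. apply invg_unique, gmulV. Qed.

Lemma invgM x y : (x * y)^-1 = y^-1 * x^-1.
Proof. apply invg_unique. rewrite <- gmulA, mulVKg, mulgV. reflexivity. Qed.

End GroupTheory.

Ltac gsimpl := repeat progress (rewrite ?invgM, ?invgK; rewrite <- ?gmulA;
  rewrite ?mulKg, ?mulVKg, ?gmul1, ?mulg1, ?gmulV, ?mulgV).

Definition conjg {G : group} (g h : G) : G := g^-1 * (h * g).

Lemma conjgM (G : group) (g x y : G) : conjg g (x * y) = conjg g x * conjg g y.
Proof. unfold conjg; gsimpl; reflexivity. Qed.

Lemma conjgV (G : group) (g x : G) : conjg g x^-1 = (conjg g x)^-1.
Proof. unfold conjg; gsimpl; reflexivity. Qed.

Lemma mem_eq {G : group} {N : G -> Prop} {x y : G} : N x -> x = y -> N y.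
Proof. intros Hx <-; exact Hx. Qed.

Section Cosets.
Context {G : group} {N : G -> Prop}.

Lemma coset_self (g : G) : is_subgroup G N -> coset G g N g.
Proof. intros [N1 _]. unfold coset. rewrite gmulV. exact N1. Qed.

Lemma coset_eq (c c' : G) : is_subgroup G N -> coset G c' N c ->
  coset G c N = coset G c' N.
Proof.
  intros [_ [NM NV]] Hc. unfold coset in *. apply pred_ext; intro y; split; intro Hy.
  - apply (mem_eq (NM _ _ Hc Hy)). gsimpl; reflexivity.
  - apply (mem_eq (NM _ _ (NV _ Hc) Hy)). gsimpl; reflexivity.
Qed.

Lemma coset_one (g : G) : is_subgroup G N -> coset G g N 1 <-> N g.
Proof.
  intros [_ [_ NV]]. unfold coset. rewrite mulg1. split; intro Hg.
  - rewrite <- (invgK g). apply NV, Hg.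
  - apply NV, Hg.
Qed.

Lemma coset_mul (a b : G) : is_normal G N ->
  (fun z => exists u v, coset G a N u /\ coset G b N v /\ z = u * v) = coset G (a * b) N.
Proof.
  intros [[N1 [NM _]] NJ]. apply pred_ext; intro z; unfold coset; split.
  - intros [u [v [Hu [Hv ->]]]].
    apply (mem_eq (NM _ _ (NJ b _ Hu) Hv)). gsimpl; reflexivity.
  - intro Hz. exists a, (a^-1 * z).
    split; [rewrite gmulV; exact N1|]. split; [|rewrite mulVKg; reflexivity].
    apply (mem_eq Hz). gsimpl; reflexivity.
Qed.

Lemma coset_inv (a : G) : is_normal G N ->
  (fun z => exists u, coset G a N u /\ z = u^-1) = coset G a^-1 N.
Proof.
  intros [[_ [_ NV]] NJ]. apply pred_ext; intro z; unfold coset; split.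
  - intros [u [Hu ->]].
    apply (mem_eq (NJ a^-1 _ (NV _ Hu))). fold (conjg a^-1 (a^-1 * u)^-1).
    unfold conjg; gsimpl; reflexivity.
  - intro Hz. exists z^-1. split; [|rewrite invgK; reflexivity].
    apply (mem_eq (NV _ (NJ a _ Hz))). gsimpl; reflexivity.
Qed.

End Cosets.

Section DerivedSeries.
Variable G : group.

Lemma generated_subgroup (A : G -> Prop) : is_subgroup G (generated G A).
Proof.
  split; [|split].
  - intros H [H1 _] _; exact H1.
  - intros x y Hx Hy H HH HA. apply (proj1 (proj2 HH)); [apply Hx | apply Hy]; auto.
  - intros x Hx H HH HA. apply (proj2 (proj2 HH)), Hx; auto.
Qed.

Lemma sub_generated (A : G -> Prop) : subset G A (generated G A).
Proof. intros x Hx H _ HA; apply HA, Hx. Qed.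

Lemma derived_subgroup n : is_subgroup G (derived G n).
Proof.
  destruct n as [|k]; simpl.
  - repeat split.
  - apply generated_subgroup.
Qed.

Lemma subgroup_conjg_preimage (H : G -> Prop) (g : G) :
  is_subgroup G H -> is_subgroup G (fun x => H (conjg g x)).
Proof.
  intros [H1 [HM HV]]. split; [|split].
  - unfold conjg; gsimpl; exact H1.
  - intros x y Hx Hy. rewrite conjgM. apply HM; auto.
  - intros x Hx. rewrite conjgV. apply HV; auto.
Qed.

Lemma derived_conjg n (g h : G) : derived G n h -> derived G n (conjg g h).
Proof.
  revert g h; induction n as [|k IH]; intros g h Hh; [exact I|].
  intros H HH HA. apply (Hh (fun x => H (conjg g x))); [apply subgroup_conjg_preimage, HH|].
  intros x [a [b [Ha [Hb ->]]]]. apply HA.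
  exists (conjg g a), (conjg g b). split; [apply IH, Ha|]. split; [apply IH, Hb|].
  unfold comm. rewrite !conjgM, !conjgV. reflexivity.
Qed.

Lemma derived_normal n : is_normal G (derived G n).
Proof. split; [apply derived_subgroup | apply derived_conjg]. Qed.

Lemma derived_succ_sub n : subset G (derived G (S n)) (derived G n).
Proof.
  intros x Hx. apply Hx; [apply derived_subgroup|].
  intros y [a [b [Ha [Hb ->]]]]. destruct (derived_subgroup n) as [_ [DM DV]].
  unfold comm. apply DM; apply DM; auto.
Qed.

Lemma derived_antimono m n : m <= n -> subset G (derived G n) (derived G m).
Proof.
  induction 1 as [|n _ IH]; intros x Hx; [exact Hx|].
  apply IH, derived_succ_sub, Hx.
Qed.

Lemma solQ_derived n : solQ G (derived G n).
Proof. split; [apply derived_normal|]. exists n; intros x Hx; exact Hx. Qed.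

End DerivedSeries.

Section Completion.
Variable G : group.
Implicit Types (x y : PSel G) (N M : G -> Prop).

Lemma PS_mul_coset x y N a b : is_normal G N ->
  x N = coset G a N -> y N = coset G b N -> PS_mul G x y N = coset G (a * b) N.
Proof. intros HN Hx Hy. unfold PS_mul. rewrite Hx, Hy. apply coset_mul, HN. Qed.

Lemma PS_inv_coset x N a : is_normal G N ->
  x N = coset G a N -> PS_inv G x N = coset G a^-1 N.
Proof. intros HN Hx. unfold PS_inv. rewrite Hx. apply coset_inv, HN. Qed.

Lemma PS_comm_coset x y N a b : is_normal G N ->
  x N = coset G a N -> y N = coset G b N -> PS_comm G x y N = coset G (comm G a b) N.
Proof.
  intros HN Hx Hy. unfold PS_comm, comm.
  apply PS_mul_coset; auto; apply PS_mul_coset; auto; apply PS_inv_coset; auto.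
Qed.

Lemma is_PS_iota g : is_PS G (PS_iota G g).
Proof.
  split.
  - intros N _. exists g; reflexivity.
  - intros N M _ _ HNM y Hy. apply HNM, Hy.
Qed.

Lemma is_PS_mul x y : is_PS G x -> is_PS G y -> is_PS G (PS_mul G x y).
Proof.
  intros [Hx Cx] [Hy Cy]. split.
  - intros N HN. destruct (Hx N HN) as [a Ha], (Hy N HN) as [b Hb].
    exists (a * b). apply PS_mul_coset; auto. apply HN.
  - intros N M HN HM HNM z [u [v [Hu [Hv ->]]]].
    exists u, v. split; [apply (Cx N M); auto|]. split; [apply (Cy N M); auto | reflexivity].
Qed.

Lemma is_PS_inv x : is_PS G x -> is_PS G (PS_inv G x).
Proof.
  intros [Hx Cx]. split.
  - intros N HN. destruct (Hx N HN) as [a Ha].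
    exists a^-1. apply PS_inv_coset; auto. apply HN.
  - intros N M HN HM HNM z [u [Hu ->]].
    exists u. split; [apply (Cx N M); auto | reflexivity].
Qed.

Lemma is_PS_comm x y : is_PS G x -> is_PS G y -> is_PS G (PS_comm G x y).
Proof. intros Hx Hy. apply is_PS_mul; apply is_PS_mul; auto; apply is_PS_inv; auto. Qed.

Lemma PS_coset_widen x M N c : is_PS G x -> solQ G M -> solQ G N -> subset G M N ->
  x M = coset G c M -> x N = coset G c N.
Proof.
  intros [Hx Cx] HM HN HMN HxM. destruct (Hx N HN) as [c' HxN].
  rewrite HxN. symmetry. apply coset_eq; [apply HN|].
  rewrite <- HxN. apply (Cx M N); auto. rewrite HxM. apply coset_self, HM.
Qed.

Lemma PS_subgroup_iota_preimage (H : PSel G -> Prop) :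
  PS_subgroup G H -> is_subgroup G (fun g => H (PS_iota G g)).
Proof.
  intros [_ [Hsat [H1 [HM HV]]]]. split; [|split].
  - exact H1.
  - intros a b Ha Hb. apply (Hsat _ _ (HM _ _ Ha Hb) (is_PS_iota _)).
    intros N HN. apply PS_mul_coset; auto. apply HN.
  - intros a Ha. apply (Hsat _ _ (HV _ Ha) (is_PS_iota _)).
    intros N HN. apply PS_inv_coset; auto. apply HN.
Qed.

(* K_N: as components are cosets, [x N 1] says that [x N] is N itself. *)
Definition PS_ker N (x : PSel G) : Prop := is_PS G x /\ x N 1.

Lemma PS_ker_iota N g : is_subgroup G N -> PS_ker N (PS_iota G g) <-> N g.
Proof.
  intro HN. unfold PS_ker, PS_iota. rewrite coset_one by exact HN.
  split; [intros [_ Hg]; exact Hg | intro Hg; split; [apply is_PS_iota | exact Hg]].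
Qed.

Lemma PS_ker_subgroup N : solQ G N -> PS_subgroup G (PS_ker N).
Proof.
  intro HN. split; [|split; [|split; [|split]]].
  - intros x [Hx _]; exact Hx.
  - intros x y [_ Hx1] Hy Hxy. split; [exact Hy|]. rewrite <- (Hxy N HN). exact Hx1.
  - apply PS_ker_iota; [apply HN | apply HN].
  - intros x y [Hx Hx1] [Hy Hy1]. split; [apply is_PS_mul; auto|].
    exists 1, 1. rewrite gmul1. auto.
  - intros x [Hx Hx1]. split; [apply is_PS_inv; auto|].
    exists 1. rewrite <- (gmulV G 1) at 2. rewrite mulg1. auto.
Qed.

Lemma PS_ker_coset x M N : PS_ker N x -> solQ G M -> solQ G N -> subset G M N ->
  exists u, N u /\ x M = coset G u M.
Proof.
  intros [Hx Hx1] HM HN HMN. destruct (proj1 Hx M HM) as [u HxM].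
  exists u. split; [|exact HxM].
  destruct (proj1 Hx N HN) as [g HxN].
  assert (HuN : x N u) by (apply (proj2 Hx M N); auto; rewrite HxM; apply coset_self, HM).
  pose proof (proj1 (proj1 HN)) as HNsub.
  rewrite HxN in Hx1, HuN. rewrite <- (coset_eq _ _ HNsub HuN) in Hx1.
  apply (coset_one _ HNsub), Hx1.
Qed.

Definition PS_tderived_commg k : PSel G -> Prop :=
  PS_generated G (fun x => exists a b,
    PS_tderived G k a /\ PS_tderived G k b /\ x = PS_comm G a b).

Lemma PS_iota_commg k h :
  (forall a, derived G k a -> PS_tderived G k (PS_iota G a)) ->
  derived G (S k) h -> PS_tderived_commg k (PS_iota G h).
Proof.
  intros Hk Hh H HH HA.
  apply (Hh (fun g => H (PS_iota G g))); [apply PS_subgroup_iota_preimage, HH|].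
  intros x [a [b [Ha [Hb ->]]]].
  apply (proj1 (proj2 HH) (PS_comm G (PS_iota G a) (PS_iota G b))).
  - apply HA. exists (PS_iota G a), (PS_iota G b). auto.
  - apply is_PS_iota.
  - intros N HN. apply PS_comm_coset; auto. apply HN.
Qed.

Lemma PS_comm_ker k x y : PS_ker (derived G k) x -> PS_ker (derived G k) y ->
  PS_ker (derived G (S k)) (PS_comm G x y).
Proof.
  intros Hx Hy.
  destruct (PS_ker_coset x (derived G (S k)) (derived G k)) as [u [Hu Hxu]],
    (PS_ker_coset y (derived G (S k)) (derived G k)) as [v [Hv Hyv]];
    auto using solQ_derived, derived_succ_sub.
  split; [apply is_PS_comm; [apply Hx | apply Hy]|].
  rewrite (PS_comm_coset _ _ _ u v), coset_one by auto using derived_normal, derived_subgroup.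
  apply sub_generated. exists u, v. auto.
Qed.

Lemma PS_ker_dense_commg k x N :
  (forall a, derived G k a -> PS_tderived G k (PS_iota G a)) ->
  PS_ker (derived G (S k)) x -> solQ G N ->
  exists a, PS_tderived_commg k a /\ a N = x N.
Proof.
  intros Hk Hker HN. destruct (proj2 HN) as [m Hm].
  pose proof (solQ_derived G (max (S k) m)) as HM.
  assert (HMk : subset G (derived G (max (S k) m)) (derived G (S k)))
    by apply derived_antimono, Nat.le_max_l.
  assert (HMN : subset G (derived G (max (S k) m)) N)
    by (intros z Hz; apply Hm, (derived_antimono G m (max (S k) m) (Nat.le_max_r _ _)), Hz).
  destruct (PS_ker_coset x _ _ Hker HM (solQ_derived G (S k)) HMk) as [c [Hc HxM]].
  exists (PS_iota G c). split; [apply PS_iota_commg; assumption|].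
  symmetry. apply (PS_coset_widen x _ _ _ (proj1 Hker) HM HN HMN HxM).
Qed.

Theorem PS_tderived_ker n x : PS_tderived G n x <-> PS_ker (derived G n) x.
Proof.
  revert x; induction n as [|k IH]; intro x.
  - split; [|intros [Hx _]; exact Hx].
    intro Hx. split; [exact Hx|].
    destruct (proj1 Hx _ (solQ_derived G 0)) as [g ->]. exact I.
  - split.
    + intros [Hx Hcl]. destruct (Hcl _ (solQ_derived G (S k))) as [a [Ha Hax]].
      enough (Hka : PS_ker (derived G (S k)) a).
      { split; [exact Hx | rewrite <- Hax; apply Hka]. }
      apply Ha; [apply PS_ker_subgroup, solQ_derived|].
      intros c [b [b' [Hb [Hb' ->]]]]. apply PS_comm_ker; apply IH; assumption.
    + intro Hker. split; [apply Hker|]. intros N HN.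
      apply PS_ker_dense_commg; [|exact Hker | exact HN].
      intros a Ha. apply IH, PS_ker_iota; [apply derived_subgroup | exact Ha].
Qed.

Lemma PS_ker_translate x N g : is_normal G N -> is_PS G x -> x N = coset G g N ->
  PS_ker N (PS_mul G (PS_inv G (PS_iota G g)) x).
Proof.
  intros HN Hx Hg. split; [apply is_PS_mul; [apply is_PS_inv, is_PS_iota | exact Hx]|].
  rewrite (PS_mul_coset _ _ _ g^-1 g HN (PS_inv_coset (PS_iota G g) _ g HN eq_refl) Hg).
  apply coset_one; [apply HN|]. rewrite gmulV. apply HN.
Qed.

End Completion.

Theorem mainTheorem1 (G : group) (n : nat) :
  (forall x : PSel G, is_PS G x ->
     exists g : car G, PS_tderived G n (PS_mul G (PS_inv G (PS_iota G g)) x)) /\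
  (forall g : car G, PS_tderived G n (PS_iota G g) <-> derived G n g).
Proof.
  pose proof (derived_normal G n) as Hnormal.
  split.
  - intros x Hx. destruct (proj1 Hx _ (solQ_derived G n)) as [g Hg].
    exists g. apply PS_tderived_ker, PS_ker_translate; assumption.
  - intro g. rewrite PS_tderived_ker. apply PS_ker_iota, Hnormal.
Qed.
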